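(* There is a constant $a>0$ such that for all $0<r\le\sqrt2$ and all $x\in[0,1]^2$ with $\|x-c\|\ge r/2$, where $c=(\tfrac12,\tfrac12)$, we have $$\mathrm{area}\big(W(x,c;r)\cap[0,1]^2\cap B(c,\|x-c\|)\big)\ge a\,r^5.$$
   Context: $B(z,\rho)$ denotes the closed Euclidean ball in $\mathbb{R}^2$. For $x,y\in\mathbb{R}^2$ and $r>0$, $W(x,y;r):=\{z\in\mathbb{R}^2: B(z,r)\supseteq B(x,r)\cap B(y,\|x-y\|)\}$. *)

From Stdlib Require Import Reals Lra.
Open Scope R_scope.

Definition pt := (R * R)%type.

Definition dist2 (x y : pt) : R :=
  sqrt ((fst x - fst y) ^ 2 + (snd x - snd y) ^ 2).

Definition ball (z : pt) (rho : R) (w : pt) : Prop := dist2 w z <= rho.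

Definition Wset (x y : pt) (r : R) (z : pt) : Prop :=
  forall w : pt, ball x r w -> ball y (dist2 x y) w -> ball z r w.

Definition unit_square (z : pt) : Prop :=
  0 <= fst z <= 1 /\ 0 <= snd z <= 1.

Record rect := mkRect { ra1 : R; rb1 : R; ra2 : R; rb2 : R }.

Definition rect_area (Q : rect) : R :=
  Rmax 0 (rb1 Q - ra1 Q) * Rmax 0 (rb2 Q - ra2 Q).

Definition in_rect (Q : rect) (z : pt) : Prop :=
  ra1 Q <= fst z <= rb1 Q /\ ra2 Q <= snd z <= rb2 Q.

(* "area(S) >= t" for the 2-dimensional Lebesgue (outer) measure:
   every countable cover of S by rectangles has total area (sup of the
   partial sums of the series) at least t. *)
Definition area_ge (S : pt -> Prop) (t : R) : Prop :=
  forall Q : nat -> rect,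
    (forall z, S z -> exists i, in_rect (Q i) z) ->
    forall eps, 0 < eps ->
      exists N, t - eps <= sum_f_R0 (fun i => rect_area (Q i)) N.

(* Write c = (1/2,1/2), d = |x - c| >= r/2 and e = (c - x)/d.  Move from x
   towards c by a distance t in [r^2/8, r^2/4] and then perturb by a vector q
   with |q|_1 <= h := r^3/128.  Every point z = x + t e + q so obtained lies in
   the region S = W(x,c;r) /\ [0,1]^2 /\ B(c,d):
   - z is in W because, for w in B(x,r) /\ B(c,d), moving the centre of B(x,r)
     a fraction al = t/d of the way to c keeps w at squared distance at most
     (1-al) r^2 + t^2 from it, and the perturbation q costs at most
     2(r+t)h + h^2, which the choice of t and h keeps below al r^2;
   - z is in the square and in B(c,d) because it is a convex combination of x
     and c up to the small perturbation q.
   Hence S contains the band of half-width h (in l^1) around a segment of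
   length r^2/8 in a unit direction e.  Such a band contains, in the
   coordinate where |e_i| >= 1/2, a vertical strip of width 2h over an interval
   of length >= r^2/16, whose planar Lebesgue measure bounds from below the
   total area of any rectangle cover; so area(S) >= r^5/1024. *)

From Stdlib Require Import Reals Lra Psatz Classical.
From mathcomp Require all_boot all_order all_algebra.
From mathcomp Require all_classical all_reals all_analysis.
From mathcomp Require Rstruct measurable_realfun.
Open Scope R_scope.

Lemma dist2_sq (p q : pt) :
  dist2 p q ^ 2 = (fst p - fst q) ^ 2 + (snd p - snd q) ^ 2.
Proof.
  unfold dist2; rewrite pow2_sqrt; [reflexivity|].
  pose proof (pow2_ge_0 (fst p - fst q)); pose proof (pow2_ge_0 (snd p - snd q)); lra.
Qed.

Lemma dist2_le_of_sq (p q : pt) (rho : R) : 0 <= rho ->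
  (fst p - fst q) ^ 2 + (snd p - snd q) ^ 2 <= rho ^ 2 -> dist2 p q <= rho.
Proof.
  intros Hrho H; unfold dist2; rewrite <- (sqrt_pow2 rho Hrho).
  apply sqrt_le_1_alt; exact H.
Qed.

Lemma sq_le_of_dist2 (p q : pt) (rho : R) : dist2 p q <= rho ->
  (fst p - fst q) ^ 2 + (snd p - snd q) ^ 2 <= rho ^ 2.
Proof.
  intros H; rewrite <- dist2_sq; apply pow_incr; split; [apply sqrt_pos | exact H].
Qed.

Lemma Rabs_le_of_sq (a b : R) : 0 <= b -> a ^ 2 <= b ^ 2 -> Rabs a <= b.
Proof.
  intros Hb H; rewrite <- (pow2_abs a) in H.
  destruct (Rle_dec (Rabs a) b) as [|Hn]; [assumption|nra].
Qed.

Lemma coords_le_of_sq (a b rho : R) : 0 <= rho ->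
  a ^ 2 + b ^ 2 <= rho ^ 2 -> Rabs a <= rho /\ Rabs b <= rho.
Proof.
  intros Hrho H; pose proof (pow2_ge_0 a); pose proof (pow2_ge_0 b).
  split; apply Rabs_le_of_sq; lra.
Qed.

(* Perturbing a vector [u] with [|u_i| <= M] by [q] with [|q|_1 <= h] raises its
   squared length by at most [2 M h + h^2] (cross term by Hoelder's inequality). *)
Lemma sq_perturb (u1 u2 q1 q2 M h : R) :
  Rabs u1 <= M -> Rabs u2 <= M -> Rabs q1 + Rabs q2 <= h ->
  (u1 + q1) ^ 2 + (u2 + q2) ^ 2 <= u1 ^ 2 + u2 ^ 2 + 2 * M * h + h ^ 2.
Proof.
  intros H1 H2 Hq.
  pose proof (Rabs_pos q1); pose proof (Rabs_pos q2); pose proof (Rabs_pos u1).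
  assert (Hcross : Rabs (u1 * q1 + u2 * q2) <= M * h).
  { eapply Rle_trans; [apply Rabs_triang|]; rewrite !Rabs_mult; nra. }
  assert (Hq2 : q1 ^ 2 + q2 ^ 2 <= h ^ 2).
  { rewrite <- (pow2_abs q1), <- (pow2_abs q2); nra. }
  pose proof (Rle_abs (u1 * q1 + u2 * q2)); nra.
Qed.

(* If [D] lies in the ball of radius [r] around 0 and in the ball of radius
   [|E|] around [E] (so that [|D|^2 <= 2 D.E]), then moving the centre a
   fraction [al] of the way to [E] keeps [D] within squared distance
   [(1 - al) r^2 + al^2 |E|^2]. *)
Lemma shrink_toward (D1 D2 E1 E2 r al : R) : 0 <= al <= 1 ->
  D1 ^ 2 + D2 ^ 2 <= r ^ 2 ->
  (D1 - E1) ^ 2 + (D2 - E2) ^ 2 <= E1 ^ 2 + E2 ^ 2 ->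
  (D1 - al * E1) ^ 2 + (D2 - al * E2) ^ 2
    <= (1 - al) * r ^ 2 + al ^ 2 * (E1 ^ 2 + E2 ^ 2).
Proof. intros Hal HD HDE; nra. Qed.

Definition toward (x c : pt) (al : R) (q : pt) : pt :=
  (fst x + al * (fst c - fst x) + fst q, snd x + al * (snd c - snd x) + snd q).

(* Membership in W(x,c;r): the budget inequality absorbs the cost of the
   perturbation in the gain [al r^2] of [shrink_toward]. *)
Lemma toward_in_W (x c : pt) (r al h : R) (q : pt) :
  0 <= al <= 1 -> Rabs (fst q) + Rabs (snd q) <= h ->
  (al * dist2 x c) ^ 2 + 2 * (r + al * dist2 x c) * h + h ^ 2 <= al * r ^ 2 ->
  Wset x c r (toward x c al q).
Proof.
  intros Hal Hq Hbudget w Hwx Hwc.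
  set (d := dist2 x c) in *.
  assert (Hd : 0 <= d) by apply sqrt_pos.
  assert (Hr : 0 <= r) by (eapply Rle_trans; [apply sqrt_pos | exact Hwx]).
  assert (HE : (fst c - fst x) ^ 2 + (snd c - snd x) ^ 2 = d ^ 2)
    by (unfold d; rewrite dist2_sq; ring).
  pose proof (sq_le_of_dist2 _ _ _ Hwx) as HD.
  assert (HDE : (fst w - fst x - (fst c - fst x)) ^ 2 + (snd w - snd x - (snd c - snd x)) ^ 2
                <= (fst c - fst x) ^ 2 + (snd c - snd x) ^ 2).
  { rewrite HE; replace (fst w - fst x - (fst c - fst x)) with (fst w - fst c) by ring;
    replace (snd w - snd x - (snd c - snd x)) with (snd w - snd c) by ring.
    exact (sq_le_of_dist2 _ _ _ Hwc). }
  destruct (coords_le_of_sq _ _ _ Hr HD) as [HD1 HD2].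
  destruct (coords_le_of_sq _ _ _ Hd (Req_le _ _ HE)) as [HE1 HE2].
  assert (Hu : forall D E, Rabs D <= r -> Rabs E <= d -> Rabs (D - al * E) <= r + al * d).
  { intros D E HDr HEd; unfold Rminus; eapply Rle_trans; [apply Rabs_triang|].
    rewrite Rabs_Ropp, Rabs_mult, (Rabs_pos_eq al) by lra; nra. }
  assert (Hq' : Rabs (- fst q) + Rabs (- snd q) <= h) by (rewrite !Rabs_Ropp; exact Hq).
  pose proof (sq_perturb _ _ _ _ _ _ (Hu _ _ HD1 HE1) (Hu _ _ HD2 HE2) Hq') as Hpert.
  pose proof (shrink_toward _ _ _ _ r al Hal HD HDE) as Hshrink; rewrite HE in Hshrink.
  apply dist2_le_of_sq; [exact Hr|]; unfold toward; simpl.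
  replace (fst w - (fst x + al * (fst c - fst x) + fst q))
    with (fst w - fst x - al * (fst c - fst x) + - fst q) by ring.
  replace (snd w - (snd x + al * (snd c - snd x) + snd q))
    with (snd w - snd x - al * (snd c - snd x) + - snd q) by ring.
  nra.
Qed.

(* Membership in B(c,d): [toward x c al q - c = (1 - al) (x - c) + q]. *)
Lemma toward_in_ball (x c : pt) (al h : R) (q : pt) :
  0 <= al <= 1 -> Rabs (fst q) + Rabs (snd q) <= h -> h <= al * dist2 x c ->
  ball c (dist2 x c) (toward x c al q).
Proof.
  intros Hal Hq Hh.
  set (d := dist2 x c) in *.
  assert (Hd : 0 <= d) by apply sqrt_pos.
  assert (HE : (fst x - fst c) ^ 2 + (snd x - snd c) ^ 2 = d ^ 2)
    by (unfold d; rewrite dist2_sq; reflexivity).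
  assert (Hu : forall E, Rabs E <= d -> Rabs ((1 - al) * E) <= (1 - al) * d).
  { intros E HEd; rewrite Rabs_mult, (Rabs_pos_eq (1 - al)) by lra; nra. }
  destruct (coords_le_of_sq _ _ _ Hd (Req_le _ _ HE)) as [HE1 HE2].
  pose proof (sq_perturb _ _ _ _ _ _ (Hu _ HE1) (Hu _ HE2) Hq) as Hpert.
  unfold ball; apply dist2_le_of_sq; [exact Hd|]; unfold toward; simpl.
  replace (fst x + al * (fst c - fst x) + fst q - fst c)
    with ((1 - al) * (fst x - fst c) + fst q) by ring.
  replace (snd x + al * (snd c - snd x) + snd q - snd c)
    with ((1 - al) * (snd x - snd c) + snd q) by ring.
  pose proof (Rabs_pos (fst q)); pose proof (Rabs_pos (snd q)).
  assert (Hsum : ((1 - al) * d + h) ^ 2 <= d ^ 2) by (apply pow_incr; split; nra).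
  assert (Hsq : ((1 - al) * (fst x - fst c)) ^ 2 + ((1 - al) * (snd x - snd c)) ^ 2
                = (1 - al) ^ 2 * d ^ 2) by (rewrite <- HE; ring).
  lra.
Qed.

(* Membership in [0,1]^2, coordinatewise: [x + al (1/2 - x)] lies in
   [[al/2, 1 - al/2]]. *)
Lemma step_stays_in_unit_interval (x al q : R) :
  0 <= x <= 1 -> 0 <= al <= 1 -> Rabs q <= al / 2 ->
  0 <= x + al * (1/2 - x) + q <= 1.
Proof.
  intros Hx Hal Hq; pose proof (Rle_abs q) as Hq1; pose proof (Rle_abs (- q)) as Hq2.
  rewrite Rabs_Ropp in Hq2.
  assert (0 <= (1 - al) * x <= 1 - al) by (split; nra).
  lra.
Qed.

Lemma toward_in_square (x : pt) (al : R) (q : pt) :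
  unit_square x -> 0 <= al <= 1 -> Rabs (fst q) + Rabs (snd q) <= al / 2 ->
  unit_square (toward x (1/2, 1/2) al q).
Proof.
  intros [Hx1 Hx2] Hal Hq; unfold toward; simpl.
  pose proof (Rabs_pos (fst q)); pose proof (Rabs_pos (snd q)).
  split; apply step_stays_in_unit_interval; auto; lra.
Qed.

Lemma step_budget (r d t : R) :
  0 < r <= 2 -> r / 2 <= d <= 1 -> r ^ 2 / 8 <= t <= r ^ 2 / 4 ->
  let al := t / d in let h := r ^ 3 / 128 in
  h <= al / 2 /\ al <= 1 /\ h <= t /\
  t ^ 2 + 2 * (r + t) * h + h ^ 2 <= al * r ^ 2.
Proof.
  intros Hr Hd Ht al h.
  assert (Hd0 : 0 < d) by lra.
  assert (Hal : al * d = t) by (unfold al; field; lra).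
  assert (Hr2 : r ^ 2 <= 2 * r) by nra.
  assert (Htal : t <= al) by nra.
  assert (Hh : h <= t / 2) by (unfold h; nra).
  repeat split.
  - lra.
  - nra.
  - lra.
  - assert (Ht2 : t ^ 2 <= t * r ^ 2 / 4) by nra.
    assert (Hrh : 2 * r * h <= t * r ^ 2 / 8) by (unfold h; nra).
    assert (Hth : 2 * t * h <= t * r ^ 2 / 32) by (unfold h; nra).
    assert (Hr4 : r ^ 4 / 256 <= t * r ^ 2 / 32) by nra.
    assert (Hhh : h ^ 2 <= r ^ 4 / 256).
    { unfold h; assert (0 <= r ^ 4) by (apply pow_le; lra); nra. }
    nra.
Qed.

Lemma unit_square_center_dist (x : pt) :
  unit_square x -> dist2 x (1/2, 1/2) <= 1.
Proof.
  intros [Hx1 Hx2]; apply dist2_le_of_sq; [lra|]; simpl; nra.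
Qed.

Lemma toward_in_region (r t : R) (x q : pt) :
  0 < r -> r <= sqrt 2 -> unit_square x -> r / 2 <= dist2 x (1/2, 1/2) ->
  r ^ 2 / 8 <= t <= r ^ 2 / 4 -> Rabs (fst q) + Rabs (snd q) <= r ^ 3 / 128 ->
  let z := toward x (1/2, 1/2) (t / dist2 x (1/2, 1/2)) q in
  Wset x (1/2, 1/2) r z /\ unit_square z /\
  ball (1/2, 1/2) (dist2 x (1/2, 1/2)) z.
Proof.
  intros Hr Hr2 Hx Hd Ht Hq z.
  assert (Hr_le_2 : r <= 2).
  { assert (Hsqrt : sqrt 2 <= sqrt (2 ^ 2)) by (apply sqrt_le_1_alt; lra).
    rewrite sqrt_pow2 in Hsqrt; lra. }
  pose proof (unit_square_center_dist x Hx) as Hd1.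
  set (d := dist2 x (1/2, 1/2)) in *.
  destruct (step_budget r d t ltac:(lra) ltac:(lra) Ht) as (Hh & Hal1 & Hht & Hbudget).
  assert (Hal : t / d * d = t) by (field; lra).
  assert (Hal0 : 0 <= t / d) by (pose proof (pow_lt r 3 Hr); lra).
  split; [|split].
  - apply (toward_in_W _ _ _ _ (r ^ 3 / 128)); [lra | exact Hq |].
    fold d; rewrite Hal; exact Hbudget.
  - apply toward_in_square; [exact Hx | lra | lra].
  - apply (toward_in_ball _ _ _ (r ^ 3 / 128)); [lra | exact Hq | fold d; lra].
Qed.

(* Lower bounds for [area_ge] through the product Lebesgue measure on R x R:
   a rectangle cover has total area at least the measure of its union, which
   in turn is at least the measure of any band it contains. *)
Module PlanarLebesgue.
Import all_boot all_order all_algebra.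
Import all_classical all_reals all_analysis.
Import Rstruct measurable_realfun.
Import Order.TTheory GRing.Theory Num.Theory.
Local Open Scope classical_set_scope.
Local Open Scope ring_scope.

Notation mu := (@lebesgue_measure R).
Notation mu2 := ((@lebesgue_measure R) \x (@lebesgue_measure R))%E.

Lemma lebesgue_itv_Rmax (c d : R) : (mu `[c, d] = (Rmax 0 (d - c))%:E)%E.
Proof.
rewrite lebesgue_measure_itv /= lte_fin.
case: ltP => cd.
  by rewrite -EFinD Rmax_right //; apply/RleP; rewrite subr_ge0 ltW.
by rewrite Rmax_left //; apply/RleP; rewrite subr_le0.
Qed.

Definition rect_set (Q : rect) : set (measurableTypeR R * measurableTypeR R) :=
  `[ra1 Q, rb1 Q] `*` `[ra2 Q, rb2 Q].

Lemma rect_set_measurable (Q : rect) : measurable (rect_set Q).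
Proof. by apply: measurableX; exact: measurable_itv. Qed.

Lemma rect_set_measure (Q : rect) : mu2 (rect_set Q) = (rect_area Q)%:E.
Proof.
rewrite product_measure1E; [|exact: measurable_itv..].
by rewrite /rect_area EFinM; congr (_ * _)%E; apply: lebesgue_itv_Rmax.
Qed.

(* A measurable set containing the band of vertical half-width [h] around the
   graph of [g] over [[a, b]] has planar measure at least [(b - a) * 2h]:
   each vertical section over [[a, b]] contains an interval of length [2h]. *)
Lemma band_le_measure (a b h : R) (g : R -> R)
    (U : set (measurableTypeR R * measurableTypeR R)) :
  a <= b -> 0 <= h -> measurable U ->
  (forall u v, a <= u <= b -> g u - h <= v <= g u + h -> U (u, v)) ->
  (((b - a) * (h *+ 2))%:E <= mu2 U)%E.
Proof.
move=> ab h0 mU HU; rewrite /product_measure1.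
have -> : ((b - a) * (h *+ 2))%:E =
    (\int[mu]_x ((\1_(`[a, b] : set (measurableTypeR R)) x)%:E * (h *+ 2)%:E))%E.
  rewrite ge0_integralZr//; last by rewrite lee_fin mulrn_wge0.
    rewrite integral_indic// setIT EFinM; congr (_ * _)%E.
    symmetry; apply: eq_trans (lebesgue_itv_Rmax a b) _; congr EFin.
    by rewrite Rmax_right //; apply/RleP; rewrite subr_ge0.
  by apply/measurable_EFinP; exact: measurable_indic.
apply: ge0_le_integral => //.
- by move=> x _; rewrite mule_ge0 // lee_fin mulrn_wge0.
- under eq_fun do rewrite -EFinM.
  by apply/measurable_EFinP; apply: measurable_funM => //; exact: measurable_indic.
- exact: measurable_fun_xsection.
move=> x _ /=; rewrite indicE; case: (boolP (x \in _)) => xab; last first.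
  by rewrite /= mul0e measure_ge0.
rewrite mul1e.
have -> : ((h *+ 2)%:E = mu `[(g x - h)%R, (g x + h)%R])%E.
  rewrite lebesgue_itv_Rmax RminusE; congr EFin.
  have -> : (g x + h) - (g x - h) = h *+ 2 by rewrite opprB addrC addrA subrK mulr2n.
  by rewrite Rmax_right //; apply/RleP; rewrite mulrn_wge0.
apply: le_measure; rewrite ?inE; [exact: measurable_itv | exact: (measurable_xsection x mU) |].
move=> y /= yI; rewrite /xsection /= inE; apply: HU => //.
by move: xab; rewrite inE /= in_itv.
Qed.

Lemma sum_f_R0_big (f : nat -> R) (n : nat) :
  sum_f_R0 f n = \sum_(0 <= i < n.+1) f i.
Proof. elim: n => [|n IH]; first by rewrite big_nat1. by rewrite big_nat_recr //= -IH. Qed.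

Lemma area_ge_of_series_bound (S : pt -> Prop) (t : R) :
  (forall Q : nat -> rect, (forall z, S z -> exists i, in_rect (Q i) z) ->
     (t%:E <= \sum_(0 <= i <oo) (rect_area (Q i))%:E)%E) -> area_ge S t.
Proof.
move=> H Q HQ eps eps0.
have f0 i : 0 <= rect_area (Q i).
  by rewrite /rect_area; apply/RleP; apply: Rmult_le_pos; apply: Rmax_l.
apply: NNPP => Hn.
have lt N : sum_f_R0 (fun i => rect_area (Q i)) N < t - eps.
  by apply/RltP; apply: Rnot_le_lt => Hle; apply: Hn; exists N.
have : (\sum_(0 <= i <oo) (rect_area (Q i))%:E <= (t - eps)%:E)%E.
  apply: lime_le; first by apply: is_cvg_nneseries => n _ _; rewrite lee_fin.
  apply: nearW => -[|n].
    by rewrite big_geq // lee_fin; apply: (le_trans (f0 0%N)); exact: ltW (lt 0%N).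
  by rewrite sumEFin lee_fin -sum_f_R0_big; exact: ltW (lt n).
move=> /(le_trans (H Q HQ)); rewrite lee_fin => /RleP Hc.
have : Rlt 0 eps by exact: eps0.
have : Rle t (Rminus t eps) by exact: Hc.
lra.
Qed.

Lemma graph_band_area (a b h : R) (g : R -> R) (S : pt -> Prop) :
  a <= b -> 0 <= h ->
  (forall u v, a <= u <= b -> g u - h <= v <= g u + h -> S (u, v)) ->
  area_ge S ((b - a) * (h *+ 2)).
Proof.
move=> ab h0 HS; apply: area_ge_of_series_bound => Q HQ.
pose U := \bigcup_i rect_set (Q i).
have mU : measurable U by apply: bigcupT_measurable => i; exact: rect_set_measurable.
have HU u v : a <= u <= b -> g u - h <= v <= g u + h -> U (u, v).
  move=> uab vg; have [i Hi] := HQ (u, v) (HS u v uab vg); exists i => //.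
  by case: Hi => -[h1 h2] [h3 h4]; split; rewrite /= in_itv /=; apply/andP; split; apply/RleP.
apply: (le_trans (band_le_measure a b h g U ab h0 mU HU)).
rewrite -(eq_eseriesr (fun i _ => rect_set_measure (Q i))).
exact: measure_sigma_subadditive (fun i => rect_set_measurable (Q i)) mU (fun z Uz => Uz).
Qed.

Local Open Scope R_scope.

Lemma graph_band_area_R (a b h : R) (g : R -> R) (S : pt -> Prop) :
  a <= b -> 0 <= h ->
  (forall u v, a <= u <= b -> Rabs (v - g u) <= h -> S (u, v)) ->
  area_ge S ((b - a) * (2 * h)).
Proof.
move=> ab h0 HS.
have -> : 2 * h = GRing.natmul h 2 by rewrite mulr2n -RplusE; lra.
apply: (graph_band_area a b h g S); [exact/RleP | exact/RleP |].
move=> u v /andP[/RleP H1 /RleP H2]; rewrite -RminusE -RplusE.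
move=> /andP[/RleP H3 /RleP H4].
by apply: HS; [split | apply: Rabs_le; split; lra].
Qed.

End PlanarLebesgue.

Lemma area_ge_weaken (S : pt -> Prop) (t t' : R) :
  area_ge S t -> t' <= t -> area_ge S t'.
Proof.
  intros H Ht Q HQ eps Heps; destruct (H Q HQ eps Heps) as [N HN]; exists N; lra.
Qed.

Definition swap (z : pt) : pt := (snd z, fst z).

Lemma area_ge_swap (S : pt -> Prop) (t : R) :
  area_ge (fun z => S (swap z)) t -> area_ge S t.
Proof.
  intros H Q HQ eps Heps.
  set (Q' := fun i => mkRect (ra2 (Q i)) (rb2 (Q i)) (ra1 (Q i)) (rb1 (Q i))).
  destruct (H Q' ltac:(intros [z1 z2] Hz; destruct (HQ _ Hz) as [i Hi]; exists i;
                       unfold in_rect in *; simpl in *; tauto) eps Heps) as [N HN].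
  exists N; replace (sum_f_R0 (fun i => rect_area (Q i)) N)
    with (sum_f_R0 (fun i => rect_area (Q' i)) N); [exact HN|].
  apply sum_eq; intros i _; unfold Q', rect_area; simpl; ring.
Qed.

Definition contains_band (S : pt -> Prop) (x e : pt) (t1 t2 h : R) : Prop :=
  forall t q, t1 <= t <= t2 -> Rabs (fst q) + Rabs (snd q) <= h ->
    S (fst x + t * fst e + fst q, snd x + t * snd e + snd q).

Lemma contains_band_flip (S : pt -> Prop) (x e : pt) (t1 t2 h : R) :
  contains_band S x e t1 t2 h ->
  contains_band S x (- fst e, - snd e) (- t2) (- t1) h.
Proof.
  intros H t q Ht Hq; simpl.
  replace (t * - fst e) with (- t * fst e) by ring.
  replace (t * - snd e) with (- t * snd e) by ring.
  apply H; [lra | exact Hq].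
Qed.

Lemma contains_band_swap (S : pt -> Prop) (x e : pt) (t1 t2 h : R) :
  contains_band S x e t1 t2 h ->
  contains_band (fun z => S (swap z)) (swap x) (swap e) t1 t2 h.
Proof.
  intros H t q Ht Hq; apply (H t (swap q) Ht); simpl; lra.
Qed.

(* If the direction has first coordinate [k >= 1/2], the band contains the
   vertical band of half-width [h] around the graph of the segment over an
   interval of length [k (t2 - t1)], of area [2 k (t2 - t1) h]. *)
Lemma contains_band_area_leading (S : pt -> Prop) (x e : pt) (t1 t2 h : R) :
  1/2 <= fst e -> t1 <= t2 -> 0 <= h -> contains_band S x e t1 t2 h ->
  area_ge S ((t2 - t1) * h).
Proof.
  destruct e as [k m]; simpl; intros He Ht Hh HS.
  apply area_ge_weaken with (k * (t2 - t1) * (2 * h)).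
  2: { assert (0 <= (2 * k - 1) * ((t2 - t1) * h)) by (apply Rmult_le_pos; nra). nra. }
  replace (k * (t2 - t1)) with ((fst x + k * t2) - (fst x + k * t1)) by ring.
  apply (PlanarLebesgue.graph_band_area_R _ _ h (fun u => snd x + m * ((u - fst x) / k)));
    [nra | exact Hh |].
  intros u v Hu Hv.
  set (t := (u - fst x) / k) in *.
  assert (Hut : u = fst x + t * k) by (unfold t; field; lra).
  clearbody t.
  replace (u, v) with (fst x + t * k + 0, snd x + t * m + (v - (snd x + m * t)))
    by (f_equal; [lra | ring]).
  apply (HS t (0, v - (snd x + m * t))); simpl.
  - split; apply (Rmult_le_reg_r k); lra.
  - rewrite Rabs_R0; lra.
Qed.

(* For a unit direction some coordinate has absolute value [>= 1/2]; flipping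
   and swapping reduce to [contains_band_area_leading]. *)
Lemma contains_band_area (S : pt -> Prop) (x e : pt) (t1 t2 h : R) :
  fst e ^ 2 + snd e ^ 2 = 1 -> t1 <= t2 -> 0 <= h -> contains_band S x e t1 t2 h ->
  area_ge S ((t2 - t1) * h).
Proof.
  intros He Ht Hh HS.
  assert (Hflip : forall S' x' e', 1/2 <= - fst e' -> contains_band S' x' e' t1 t2 h ->
                    area_ge S' ((t2 - t1) * h)).
  { intros S' x' e' He' HS'.
    replace ((t2 - t1) * h) with ((- t1 - - t2) * h) by ring.
    apply (contains_band_area_leading S' x' (- fst e', - snd e')); [exact He' | lra | exact Hh |].
    exact (contains_band_flip _ _ _ _ _ _ HS'). }
  destruct (Rle_or_lt (1/2) (fst e)) as [H1|H1];
    [exact (contains_band_area_leading _ _ _ _ _ _ H1 Ht Hh HS)|].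
  destruct (Rle_or_lt (1/2) (- fst e)) as [H2|H2]; [exact (Hflip _ _ _ H2 HS)|].
  apply area_ge_swap; apply contains_band_swap in HS.
  destruct (Rle_or_lt (1/2) (snd e)) as [H3|H3];
    [exact (contains_band_area_leading _ _ (swap e) _ _ _ H3 Ht Hh HS)|].
  apply (Hflip _ _ (swap e) ltac:(simpl; nra) HS).
Qed.

(* With [e = (c - x)/d] the region contains the band of radius [r^3/128]
   around [{x + t e | r^2/8 <= t <= r^2/4}]; hence its area is at least
   [r^2/8 * r^3/128 = r^5/1024]. *)
Theorem mainTheorem12 :
  exists a : R, 0 < a /\
    forall (r : R) (x : pt),
      0 < r -> r <= sqrt 2 ->
      unit_square x ->
      r / 2 <= dist2 x (1/2, 1/2) ->
      area_ge
        (fun z => Wset x (1/2, 1/2) r z /\ unit_square z /\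
                  ball (1/2, 1/2) (dist2 x (1/2, 1/2)) z)
        (a * r ^ 5).
Proof.
  exists (1/1024); split; [lra|].
  intros r x Hr Hr2 Hx Hd.
  pose proof (dist2_sq x (1/2, 1/2)) as Hdsq.
  set (d := dist2 x (1/2, 1/2)) in *; cbn [fst snd] in Hdsq.
  assert (Hd0 : d <> 0) by lra.
  set (e := ((1/2 - fst x) / d, (1/2 - snd x) / d)).
  apply area_ge_weaken with ((r ^ 2 / 4 - r ^ 2 / 8) * (r ^ 3 / 128)); [|right; field].
  apply (contains_band_area _ x e).
  - unfold e; cbn [fst snd].
    replace (((1/2 - fst x) / d) ^ 2 + ((1/2 - snd x) / d) ^ 2) with (d ^ 2 / d ^ 2)
      by (rewrite Hdsq at 1; field; exact Hd0).
    field; exact Hd0.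
  - nra.
  - pose proof (pow_lt r 3 Hr); lra.
  - intros t q Ht Hq.
    replace (fst x + t * fst e + fst q, snd x + t * snd e + snd q)
      with (toward x (1/2, 1/2) (t / d) q)
      by (unfold toward, e; simpl; f_equal; field; lra).
    exact (toward_in_region r t x q Hr Hr2 Hx Hd Ht Hq).
Qed.
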